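(* In the setting described in the context, let $q\in\{1,\dots,n\}$. The following are equivalent: (1) there exists a $q$-maxitive capacity $\mu:2^{\mathcal C}\to L$ with $S_\mu(x^{(k)})=\alpha^{(k)}$ for all $k\in\{1,\dots,N\}$; (2) the reduced system $(S_q)$ is consistent and there exists $A\subseteq\mathcal C$ with $|A|=q$ and $e_q(A)=1$.
   Context: Let $\mathcal C=\{1,\dots,n\}$ and let $L$ be either a finite totally ordered set $0=\xi_1<\dots<\xi_l=1$ or $L=[0,1]$. A capacity is a map $\mu:2^{\mathcal C}\to L$ with $\mu(\emptyset)=0$, $\mu(\mathcal C)=1$, monotone for inclusion; it is $q$-maxitive if for all $X$ with $|X|>q$, $\mu(X)=\max_{Y\subsetneq X,\ |Y|\le q}\mu(Y)$. Sugeno integral: $S_\mu(x)=\max_{A\subseteq\mathcal C}\min(\min_{i\in A}x_i,\mu(A))$ with $\min_{i\in\emptyset}x_i=1$. Training data: $N$ pairs $(x^{(k)},\alpha^{(k)})$, $x^{(k)}\in L^n$, $\alpha^{(k)}\in L$. For nonempty $A$, $m_{k,A}=\min_{i\in A}x^{(k)}_i$. The reduced system $(S_q)$ has unknowns $\xi_A\in L$ for $A\subseteq\mathcal C$ with $0<|A|\le q$, and equations $\max_{0<|A|\le q}\min(m_{k,A},\xi_A)=\alpha^{(k)}$, $k=1,\dots,N$; it is consistent if it has a solution in $L$. For $0<|A|\le q$, $e_q(A)=\min_{1\le k\le N}(m_{k,A}\to_G\alpha^{(k)})$, where $a\to_G b=1$ if $a\le b$ and $a\to_G b=b$ otherwise.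 *)

From HB Require Import structures.
From mathcomp Require Import all_boot all_order all_algebra.
From mathcomp Require Import reals.
Set Implicit Arguments. Unset Strict Implicit. Unset Printing Implicit Defensive.
Import Order.TTheory GRing.Theory Num.Theory.
Local Open Scope ring_scope.

(* The scale L, viewed inside the reals: either a finite chain
   0 = xi_1 < ... < xi_l = 1 (a finite subset of [0,1] containing 0 and 1),
   or the whole unit interval [0,1]. *)
Definition is_scale (R : realType) (L : pred R) : Prop :=
  (forall x, L x = (0 <= x <= 1)) \/
  (exists s : seq R, (forall x, L x = (x \in s)) /\ 0 \in s /\ 1 \in s /\
                     all (fun x => 0 <= x <= 1) s).

(* Criteria C = {1,...,n} are represented by 'I_n. *)
Definition capacity (R : realType) (L : pred R) (n : nat)
  (mu : {set 'I_n} -> R) : Prop :=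
  (forall A, L (mu A)) /\ mu set0 = 0 /\ mu setT = 1 /\
  (forall A B : {set 'I_n}, A \subset B -> mu A <= mu B).

Definition q_maxitive (R : realType) (n q : nat) (mu : {set 'I_n} -> R) : Prop :=
  forall X : {set 'I_n}, (q < #|X|)%N ->
    mu X = \big[Num.max/0]_(Y : {set 'I_n} | (Y \proper X) && (#|Y| <= q)%N) mu Y.

(* min over i in A of x_i, with the empty minimum equal to 1 *)
Definition minA (R : realType) (n : nat) (x : 'I_n -> R) (A : {set 'I_n}) : R :=
  \big[Num.min/1]_(i in A) x i.

Definition sugeno (R : realType) (n : nat) (mu : {set 'I_n} -> R) (x : 'I_n -> R) : R :=
  \big[Num.max/0]_(A : {set 'I_n}) Num.min (minA x A) (mu A).

Definition Sq_consistent (R : realType) (L : pred R) (n N q : nat)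
  (x : 'I_N -> 'I_n -> R) (alpha : 'I_N -> R) : Prop :=
  exists xi : {set 'I_n} -> R,
    (forall A : {set 'I_n}, (0 < #|A| <= q)%N -> L (xi A)) /\
    (forall k : 'I_N,
       \big[Num.max/0]_(A : {set 'I_n} | (0 < #|A| <= q)%N) Num.min (minA (x k) A) (xi A)
       = alpha k).

Definition impG (R : realType) (a b : R) : R := if a <= b then 1 else b.

Definition e_q (R : realType) (n N : nat) (x : 'I_N -> 'I_n -> R) (alpha : 'I_N -> R)
  (A : {set 'I_n}) : R :=
  \big[Num.min/1]_(k : 'I_N) impG (minA (x k) A) (alpha k).

From Pilot Require Import Defs.
From HB Require Import structures.
From mathcomp Require Import all_boot all_order all_algebra.
From mathcomp Require Import reals.

Set Implicit Arguments.
Unset Strict Implicit.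
Unset Printing Implicit Defensive.

Import Order.TTheory GRing.Theory Num.Theory.
Local Open Scope ring_scope.

(* Order.TTheory.minA (associativity of min) hides the definition. *)
Local Notation minA := Defs.minA.

(* A set function xi on the nonempty sets of size at most q generates the
   capacity A |-> max {xi B | B \subset A, 0 < |B| <= q}, which is q-maxitive;
   its Sugeno integral is the left-hand side of (S_q), because enlarging A only
   lowers m_{k,A}.  A q-maxitive capacity is generated by its own values on
   these sets, so it solves (S_q), and mu(C) = 1 is attained on one of them;
   every superset A of size q of that set has m_{k,A} <= alpha_k for all k,
   which is e_q(A) = 1.  Conversely, raising a solution of (S_q) to 1 at A0
   keeps every equation precisely because m_{k,A0} <= alpha_k, and the
   capacity generated by the raised solution takes the value 1 on C. *)

Lemma exists_superset_card (T : finType) (Y : {set T}) k :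
  (#|Y| <= k <= #|T|)%N -> exists2 A : {set T}, Y \subset A & #|A| = k.
Proof.
elim: k => [|k IH] /andP[le_Yk le_kT].
  by exists Y => //; apply/eqP; rewrite -leqn0.
move: le_Yk; rewrite leq_eqVlt => /predU1P[<- | lt_Yk]; first by exists Y.
have [A sYA card_A] := IH (introT andP (conj lt_Yk (ltnW le_kT))).
have /card_gt0P [i] : (0 < #|~: A|)%N.
  by rewrite -(ltn_add2l k) addn0 -{2}card_A cardsC.
rewrite in_setC => iNA; exists (i |: A); last by rewrite cardsU1 iNA card_A.
exact: subset_trans sYA (subsetUr _ _).
Qed.

Lemma is_scale_unit (R : realType) (L : pred R) :
  is_scale L -> [/\ L 0, L 1 & forall y, L y -> 0 <= y <= 1].
Proof.
case=> [LE | [s [LE [s0 [s1 /allP s_unit]]]]].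
  by split; rewrite ?LE ?lexx ?ler01 // => y; rewrite LE.
by split; rewrite ?LE // => y; rewrite LE => /s_unit.
Qed.

Section Capacities.
Variables (R : realType) (n q : nat).
Implicit Types (xi mu : {set 'I_n} -> R) (A B Y : {set 'I_n}) (x : 'I_n -> R).

Lemma minA_sub x A B : A \subset B -> minA x B <= minA x A.
Proof.
move=> sAB; apply: le_bigmin => [|i iA]; first exact: bigmin_le_id.
by apply: bigmin_le_cond; apply: (subsetP sAB).
Qed.

Lemma minA_le1 x A : minA x A <= 1.
Proof. exact: bigmin_le_id. Qed.

Definition reduced_sugeno xi x : R :=
  \big[Num.max/0]_(A : {set 'I_n} | (0 < #|A| <= q)%N) Num.min (minA x A) (xi A).

Lemma reduced_sugeno_ge xi x A :
  (0 < #|A| <= q)%N -> Num.min (minA x A) (xi A) <= reduced_sugeno xi x.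
Proof. by move=> A_small; apply: le_bigmax_cond. Qed.

Definition qmaxitive_ext xi A : R :=
  \big[Num.max/0]_(B : {set 'I_n} | (0 < #|B| <= q)%N && (B \subset A)) xi B.

Lemma qmaxitive_ext_in xi (P : pred R) A :
  P 0 -> (forall B, (0 < #|B| <= q)%N -> B \subset A -> P (xi B)) ->
  P (qmaxitive_ext xi A).
Proof.
move=> P0 P_xi; apply: (big_ind P) => // [a b Pa Pb | B /andP[]]; last exact: P_xi.
by rewrite maxEle; case: ifP.
Qed.

Lemma qmaxitive_ext_ge xi A B :
  (0 < #|B| <= q)%N -> B \subset A -> xi B <= qmaxitive_ext xi A.
Proof. by move=> B_small sBA; apply: le_bigmax_cond; rewrite B_small sBA. Qed.

Lemma qmaxitive_ext_mono xi A B :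
  A \subset B -> qmaxitive_ext xi A <= qmaxitive_ext xi B.
Proof.
move=> sAB; apply: bigmax_le => [|C /andP[C_small sCA]]; first exact: bigmax_ge_id.
exact/qmaxitive_ext_ge/(subset_trans sCA).
Qed.

Lemma qmaxitive_ext0 xi : qmaxitive_ext xi set0 = 0.
Proof.
apply: big_pred0 => B; rewrite subset0.
by case: eqP => [->|_]; rewrite ?cards0 ?andbF.
Qed.

Lemma q_maxitive_ext xi : q_maxitive q (qmaxitive_ext xi).
Proof.
move=> X lt_qX; apply: le_anti; apply/andP; split.
  apply: bigmax_le => [|B /andP[B_small sBX]]; first exact: bigmax_ge_id.
  apply: le_trans (qmaxitive_ext_ge xi B_small (subxx B)) _.
  apply: le_bigmax_cond; case/andP: B_small => _ le_Bq.
  by rewrite properEcard sBX (leq_ltn_trans le_Bq lt_qX).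
apply: bigmax_le => [|Y /andP[/proper_sub sYX _]]; first exact: bigmax_ge_id.
exact: qmaxitive_ext_mono.
Qed.

Lemma sugeno_qmaxitive_ext xi x :
  sugeno (qmaxitive_ext xi) x = reduced_sugeno xi x.
Proof.
apply: le_anti; apply/andP; split.
  apply: bigmax_le => [|A _]; first exact: bigmax_ge_id.
  apply: (qmaxitive_ext_in (P := fun v => Num.min (minA x A) v <= _)).
    by rewrite ge_min bigmax_ge_id orbT.
  move=> B B_small sBA; apply: le_trans (reduced_sugeno_ge xi x B_small).
  exact/le_min2/lexx/minA_sub.
apply: bigmax_le => [|B B_small]; first exact: bigmax_ge_id.
apply: le_trans (le_bigmax _ _ B).
exact/le_min2/qmaxitive_ext_ge.
Qed.

Lemma capacity_qmaxitive_ext (L : pred R) xi A0 :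
  L 0 -> (forall y, L y -> y <= 1) ->
  (forall B, (0 < #|B| <= q)%N -> L (xi B)) ->
  (0 < #|A0| <= q)%N -> xi A0 = 1 ->
  capacity L (qmaxitive_ext xi).
Proof.
move=> L0 L_le1 xiL A0_small xiA0.
split; [|split; [|split]]; last exact: qmaxitive_ext_mono.
- by move=> A; apply: qmaxitive_ext_in => // B B_small _; apply: xiL.
- exact: qmaxitive_ext0.
apply: le_anti; apply/andP; split.
  apply: (qmaxitive_ext_in (P := fun v => v <= 1)) => [|B B_small _].
    exact: ler01.
  exact/L_le1/xiL.
by rewrite -{1}xiA0 qmaxitive_ext_ge ?subsetT.
Qed.

Definition raise_to1 xi A0 B : R := if B == A0 then 1 else xi B.

Lemma reduced_sugeno_raise xi A0 x :
  minA x A0 <= reduced_sugeno xi x ->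
  reduced_sugeno (raise_to1 xi A0) x = reduced_sugeno xi x.
Proof.
move=> le_A0; rewrite /raise_to1; apply: le_anti; apply/andP; split.
  apply: bigmax_le => [|B B_small]; first exact: bigmax_ge_id.
  case: eqP => [-> | _]; last exact: reduced_sugeno_ge.
  by rewrite min_l ?minA_le1.
apply: le_bigmax2 => B _; case: eqP => [-> | _] //.
by rewrite [X in _ <= X]min_l ?minA_le1 // ge_min lexx.
Qed.

Lemma e_q_eq1P N (x : 'I_N -> 'I_n -> R) (alpha : 'I_N -> R) A :
  e_q x alpha A = 1 <-> forall k, minA (x k) A <= alpha k.
Proof.
split=> [e1 k | le_alpha].
  have : 1 <= impG (minA (x k) A) (alpha k) by rewrite -e1 bigmin_le.
  rewrite /impG; case: ifP => // /negbT; rewrite -ltNge => lt_alpha le1_alpha.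
  by have := le_lt_trans le1_alpha lt_alpha; rewrite ltNge minA_le1.
apply: (big_ind (fun v => v = 1)) => // [a b -> -> | k _]; first exact: minxx.
by rewrite /impG le_alpha.
Qed.

Section QMaxitiveCapacity.
Variables (mu : {set 'I_n} -> R) (mu0 : mu set0 = 0).
Hypotheses (mu_mono : forall A B, A \subset B -> mu A <= mu B)
           (mu_qmax : q_maxitive q mu).

Lemma qmaxitive_extE A : qmaxitive_ext mu A = mu A.
Proof.
have mu_ge0 B : 0 <= mu B by rewrite -mu0 mu_mono ?sub0set.
have le_ext Y : (#|Y| <= q)%N -> Y \subset A -> mu Y <= qmaxitive_ext mu A.
  move=> le_Yq sYA; case: (posnP #|Y|) => [/cards0_eq -> | Y_gt0].
    by rewrite mu0 bigmax_ge_id.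
  by apply: qmaxitive_ext_ge; rewrite ?Y_gt0.
apply: le_anti; apply/andP; split.
  by apply: bigmax_le => // B /andP[_]; apply: mu_mono.
case: (leqP #|A| q) => [le_Aq | lt_qA]; first exact: le_ext.
rewrite mu_qmax //; apply: bigmax_le => [|Y /andP[/proper_sub sYA le_Yq]].
  exact: bigmax_ge_id.
exact: le_ext.
Qed.

Lemma sugeno_q_maxitive x : sugeno mu x = reduced_sugeno mu x.
Proof.
by rewrite -sugeno_qmaxitive_ext; apply: eq_bigr => A _; rewrite qmaxitive_extE.
Qed.

Lemma q_maxitive_focal :
  mu setT = 1 -> exists2 Y : {set 'I_n}, (0 < #|Y| <= q)%N & mu Y = 1.
Proof.
move=> mu1.
have [Y /andP[Y_small /eqP muY] | none] :=
  pickP [pred Y : {set 'I_n} | (0 < #|Y| <= q)%N && (mu Y == 1)]; first by exists Y.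
have : qmaxitive_ext mu setT != 1.
  apply: (qmaxitive_ext_in (P := fun v => v != 1)) => [|B B_small _].
    by rewrite eq_sym oner_eq0.
  by have := none B; rewrite /= B_small => /negbT.
by rewrite qmaxitive_extE mu1 eqxx.
Qed.

End QMaxitiveCapacity.

End Capacities.

Theorem theorem2 (R : realType) (L : pred R) (n N q : nat)
  (x : 'I_N -> 'I_n -> R) (alpha : 'I_N -> R) :
  is_scale L ->
  (forall k i, L (x k i)) -> (forall k, L (alpha k)) ->
  (1 <= q <= n)%N ->
  (exists mu : {set 'I_n} -> R,
      capacity L mu /\ q_maxitive q mu /\ (forall k, sugeno mu (x k) = alpha k))
  <->
  (Sq_consistent L q x alpha /\
   exists A : {set 'I_n}, #|A| = q /\ e_q x alpha A = 1).
Proof.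
move=> L_scale _ _ /andP[q_gt0 le_qn]; have [L0 L1 L_unit] := is_scale_unit L_scale.
split=> [[mu [[muL [mu0 [mu1 mu_mono]]] [mu_qmax mu_sol]]] |
         [[xi [xiL xi_sol]] [A0 [card_A0 /e_q_eq1P A0_le]]]].
- have red_sol k : reduced_sugeno q mu (x k) = alpha k.
    by rewrite -sugeno_q_maxitive.
  split; first by exists mu.
  have [Y Y_small muY] := q_maxitive_focal mu0 mu_mono mu_qmax mu1.
  have [|A sYA card_A] := @exists_superset_card _ Y q.
    by case/andP: Y_small => _ ->; rewrite card_ord.
  exists A; split => //; apply/e_q_eq1P => k.
  rewrite -red_sol (le_trans (minA_sub _ sYA)) //.
  by have := reduced_sugeno_ge mu (x k) Y_small; rewrite muY min_l ?minA_le1.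
- have red_sol k : reduced_sugeno q xi (x k) = alpha k := xi_sol k.
  have A0_small : (0 < #|A0| <= q)%N by rewrite card_A0 q_gt0 leqnn.
  exists (qmaxitive_ext q (raise_to1 xi A0)); split; [|split].
  + apply: (capacity_qmaxitive_ext (A0 := A0)) => //; last by rewrite /raise_to1 eqxx.
      by move=> y /L_unit /andP[].
    by move=> B B_small; rewrite /raise_to1; case: eqP => // _; apply: xiL.
  + exact: q_maxitive_ext.
  + by move=> k; rewrite sugeno_qmaxitive_ext reduced_sugeno_raise red_sol.
Qed.
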